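(* Let $b_x,b_y,u_x,u_y,K$ be positive constants with $u_y>u_x$ and $b_x\geq b_y$, let $h>0$, and consider the discrete system \[ X_{n+1}=\frac{X_n(1+hb_x)}{1+h\left(\frac{b_x}{K}X_n+\frac{b_x}{K}Y_n+u_x\right)},\qquad Y_{n+1}=\frac{Y_n(1+hb_y)}{1+h\left(\frac{b_y}{K}X_n+\frac{b_y}{K}Y_n+u_y\right)} . \] Let $\bar X=K(1-u_x/b_x)$ and $\bar Y=K(1-u_y/b_y)$. Then, for every $h>0$: (i) the system is locally asymptotically stable around $E_0^V=(0,0)$ if $b_x<u_x$ and $b_y<u_y$; (ii) the system is locally asymptotically stable around $E_1^V=(\bar X,0)$ if $b_x>u_x$ and $\frac{b_y}{u_y}<\frac{b_x}{u_x}$; (iii) the fixed point $E_2^V=(0,\bar Y)$ is always unstable.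
   Context: This is a nonstandard finite-difference discretization (step size $h$) of a host–parasite model with perfect vertical transmission and no horizontal transmission; $X,Y$ are uninfected and infected host densities, $b_x,b_y$ birth rates, $u_x,u_y$ death rates, $K$ carrying capacity. The paper assumes throughout that $u_y>u_x$ and $b_x\geq b_y$. A fixed point of the map is called (locally asymptotically) stable if both eigenvalues of the Jacobian of the map at the fixed point have modulus strictly less than $1$, and unstable otherwise. *)

From HB Require Import structures.
From mathcomp Require Import all_boot all_order all_algebra.
From mathcomp Require Import complex.
From mathcomp Require Import all_classical all_reals all_analysis.
Set Implicit Arguments. Unset Strict Implicit. Unset Printing Implicit Defensive.
Import Order.TTheory GRing.Theory Num.Theory.
Local Open Scope ring_scope.

Definition nsfd_map {R : realType} (h bx by_ ux uy K : R) (p : R * R) : R * R :=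
  let X := p.1 in let Y := p.2 in
  (X * (1 + h * bx) / (1 + h * (bx / K * X + bx / K * Y + ux)),
   Y * (1 + h * by_) / (1 + h * (by_ / K * X + by_ / K * Y + uy))).

Definition coord2 {R : realType} (i : 'I_2) (p : R * R) : R :=
  if i == ord0 then p.1 else p.2.

Definition upd2 {R : realType} (j : 'I_2) (p : R * R) (t : R) : R * R :=
  if j == ord0 then (t, p.2) else (p.1, t).

Definition jacobian2 {R : realType} (F : R * R -> R * R) (p : R * R) : 'M[R]_2 :=
  \matrix_(i < 2, j < 2) derive1 (fun t => coord2 i (F (upd2 j p t))) (coord2 j p).

Definition is_eigenvalue {R : realType} (n : nat) (A : 'M[R]_n) (z : R[i]) : Prop :=
  root (map_poly (fun x : R => (x%:C)%C) (char_poly A)) z.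

(* A fixed point p of F is (locally asymptotically) stable if all eigenvalues of
   the Jacobian at p have modulus < 1; unstable otherwise. *)
Definition fp_stable {R : realType} (F : R * R -> R * R) (p : R * R) : Prop :=
  forall z : R[i], is_eigenvalue (jacobian2 F p) z -> `|z| < 1.

Definition fp_unstable {R : realType} (F : R * R -> R * R) (p : R * R) : Prop :=
  ~ fp_stable F p.

(* The Jacobian of the map is triangular at each of the three boundary fixed
   points, because a coordinate that vanishes stays zero whatever the other
   one does; its eigenvalues are therefore its two diagonal entries.  Each
   diagonal entry is the derivative of a linear fraction t |-> t a / (b + c t),
   namely a b / (b + c t)^2: at t = 0 this is a / b, and at a nonzero fixed
   coordinate (where b + c t = a) it is b / a.  This gives the entries
   (1 + h b_x)/(1 + h u_x) and (1 + h b_y)/(1 + h u_y) at E_0,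
   (1 + h u_x)/(1 + h b_x) and (1 + h b_y)/(1 + h (b_y Xbar/K + u_y)) at E_1,
   (1 + h b_x)/(1 + h (b_x Ybar/K + u_x)) and (1 + h u_y)/(1 + h b_y) at E_2,
   positive quotients compared with 1 by the hypotheses.  At E_2 the
   second entry exceeds 1 when b_y < u_y; otherwise Ybar >= 0 and the first
   one does, since b_x u_y / b_y >= u_y > u_x. *)
From HB Require Import structures.
From mathcomp Require Import all_boot all_order all_algebra.
From mathcomp Require Import complex.
From mathcomp Require Import ring lra.
From mathcomp Require Import all_classical all_reals all_analysis.
Import Order.TTheory GRing.Theory Num.Theory.
Local Open Scope ring_scope.

Section LinearFraction.
Variables (R : realType) (a b c : R).

Lemma derive1_linear_fraction t0 : b + c * t0 != 0 ->
  derive1 (fun t => t * a / (b + c * t)) t0 = a * b / (b + c * t0) ^+ 2.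
Proof.
move=> nz; rewrite derive1E; apply: derive_val; apply: is_derive_eq.
by rewrite /GRing.scale /=; field.
Qed.

Lemma derive1_linear_fraction0 : b != 0 ->
  derive1 (fun t => t * a / (b + c * t)) 0 = a / b.
Proof.
move=> nz; rewrite derive1_linear_fraction mulr0 addr0 //.
by field.
Qed.

Lemma derive1_linear_fraction_fixed t0 : b + c * t0 = a -> a != 0 ->
  derive1 (fun t => t * a / (b + c * t)) t0 = b / a.
Proof.
move=> fix_t0 nz; rewrite derive1_linear_fraction fix_t0 //.
by field.
Qed.

End LinearFraction.

Lemma normr_pdivr_lt1 (R : realFieldType) (a b : R) :
  0 < a -> a < b -> `|a / b| < 1.
Proof.
move=> a_gt0 lt_ab; have b_gt0 : 0 < b by apply: lt_trans lt_ab.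
by rewrite ger0_norm ?divr_ge0 ?ltW // ltr_pdivrMr // mul1r.
Qed.

Lemma normr_pdivr_ge1 (R : realFieldType) (a b : R) :
  0 < b -> b <= a -> 1 <= `|a / b|.
Proof.
move=> b_gt0 le_ba; have a_gt0 : 0 < a by apply: lt_le_trans le_ba.
rewrite ger0_norm; last by rewrite divr_ge0 // ltW.
by rewrite ler_pdivlMr // mul1r.
Qed.

Lemma normc_real (R : rcfType) (x : R) : `|(x%:C)%C| = (`|x|%:C)%C.
Proof. by rewrite normc_def /= expr0n /= addr0 sqrtr_sqr. Qed.

Lemma char_poly_trmx (R : comNzRingType) n (A : 'M[R]_n) :
  char_poly A^T = char_poly A.
Proof.
rewrite /char_poly -det_tr; congr (\det _).
by apply/matrixP => i j; rewrite !mxE eq_sym.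
Qed.

Section TriangularMatrix2.
Variables (R : comNzRingType) (A : 'M[R]_2).
Hypothesis A_trig : A 0 1 = 0 \/ A 1 0 = 0.

Lemma char_poly_trig2 :
  char_poly A = ('X - (A 0 0)%:P) * ('X - (A 1 1)%:P).
Proof.
suff upper (B : 'M[R]_2) : B 0 1 = 0 ->
    char_poly B = ('X - (B 0 0)%:P) * ('X - (B 1 1)%:P).
  by case: A_trig => [/upper //|A10]; rewrite -char_poly_trmx upper ?mxE.
move=> B01; rewrite char_poly_trig; last first.
  apply/is_trig_mxP => -[[|[|//]] ?] [[|[|//]] ?] //= _.
  by rewrite -B01; congr (B _ _); apply: val_inj.
rewrite !big_ord_recr big_ord0 /= mul1r.
by congr (('X - (B _ _)%:P) * ('X - (B _ _)%:P)); apply: val_inj.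
Qed.

End TriangularMatrix2.

Lemma is_eigenvalue_trig2 (R : realType) (A : 'M[R]_2) (z : R[i]) :
  A 0 1 = 0 \/ A 1 0 = 0 ->
  is_eigenvalue A z <-> z = ((A 0 0)%:C)%C \/ z = ((A 1 1)%:C)%C.
Proof.
move=> A_trig; rewrite /is_eigenvalue char_poly_trig2 //.
rewrite rmorphM /= !map_polyXsubC /= rootM !root_XsubC.
by split => [/orP[]/eqP|[]->]; [left|right|rewrite eqxx|rewrite eqxx orbT].
Qed.

Section TriangularJacobian.
Variables (R : realType) (F : R * R -> R * R) (p : R * R).
Hypothesis J_trig : jacobian2 F p 0 1 = 0 \/ jacobian2 F p 1 0 = 0.

Lemma fp_stable_trig2 :
  `|jacobian2 F p 0 0| < 1 -> `|jacobian2 F p 1 1| < 1 -> fp_stable F p.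
Proof.
move=> J00_lt1 J11_lt1 z /(@is_eigenvalue_trig2 _ _ _ J_trig) [] ->;
  by rewrite normc_real ltcR.
Qed.

Lemma fp_unstable_trig2 (i : 'I_2) :
  1 <= `|jacobian2 F p i i| -> fp_unstable F p.
Proof.
move=> Jii_ge1 stable.
have : `|((jacobian2 F p i i)%:C)%C| < 1.
  apply/stable/(@is_eigenvalue_trig2 _ _ _ J_trig).
  by case: i {Jii_ge1} => -[|[|//]] ? /=; [left|right]; congr (_%:C)%C;
    congr (jacobian2 F p _ _); apply: val_inj.
by rewrite normc_real ltcR ltNge Jii_ge1.
Qed.

End TriangularJacobian.

Section NsfdMap.
Variables (R : realType) (h bx by_ ux uy K : R).
Local Notation F := (nsfd_map h bx by_ ux uy K).

Lemma nsfd_jacobian00 p : jacobian2 F p 0 0 = derive1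
  (fun t => t * (1 + h * bx) / ((1 + h * (bx / K * p.2 + ux)) + h * (bx / K) * t))
  p.1.
Proof.
rewrite /jacobian2 mxE /coord2 /upd2 /=.
by congr derive1; apply/funext => t; congr (_ / _); ring.
Qed.

Lemma nsfd_jacobian11 p : jacobian2 F p 1 1 = derive1
  (fun t => t * (1 + h * by_) / ((1 + h * (by_ / K * p.1 + uy)) + h * (by_ / K) * t))
  p.2.
Proof.
rewrite /jacobian2 mxE /coord2 /upd2 /=.
by congr derive1; apply/funext => t; congr (_ / _); ring.
Qed.

Lemma nsfd_jacobian01 p : p.1 = 0 -> jacobian2 F p 0 1 = 0.
Proof.
move=> p1_0; rewrite /jacobian2 mxE /coord2 /upd2 /= p1_0.
by under eq_fun do rewrite !mul0r; apply: derive1_cst.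
Qed.

Lemma nsfd_jacobian10 p : p.2 = 0 -> jacobian2 F p 1 0 = 0.
Proof.
move=> p2_0; rewrite /jacobian2 mxE /coord2 /upd2 /= p2_0.
by under eq_fun do rewrite !mul0r; apply: derive1_cst.
Qed.


Lemma nsfd_stable_origin : 0 < h -> 0 < bx -> 0 < by_ ->
  bx < ux -> by_ < uy -> fp_stable F (0, 0).
Proof.
move=> h_gt0 bx_gt0 by_gt0 lt_bx_ux lt_by_uy.
have hux_gt0 : 0 < 1 + h * ux by nra.
have huy_gt0 : 0 < 1 + h * uy by nra.
apply: fp_stable_trig2; first by left; apply: nsfd_jacobian01.
- rewrite nsfd_jacobian00 /= mulr0 add0r derive1_linear_fraction0 ?gt_eqF //.
  apply: normr_pdivr_lt1; nra.
- rewrite nsfd_jacobian11 /= mulr0 add0r derive1_linear_fraction0 ?gt_eqF //.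
  apply: normr_pdivr_lt1; nra.
Qed.

Lemma nsfd_stable_uninfected : 0 < h -> 0 < bx -> 0 < by_ -> 0 < ux -> 0 < uy ->
  0 < K -> ux < bx -> by_ / uy < bx / ux -> fp_stable F (K * (1 - ux / bx), 0).
Proof.
move=> h_gt0 bx_gt0 by_gt0 ux_gt0 uy_gt0 K_gt0 lt_ux_bx lt_ratios.
have [bx_neq0 K_neq0] : bx != 0 /\ K != 0 by split; rewrite gt_eqF.
have lt_by_ux_uy : by_ * ux / bx < uy.
  move: lt_ratios; rewrite ltr_pdivrMr // mulrAC ltr_pdivlMr // ltr_pdivrMr //.
  lra.
have Xbar_term : by_ / K * (K * (1 - ux / bx)) = by_ - by_ * ux / bx.
  by field; apply/andP.
apply: fp_stable_trig2; first by right; apply: nsfd_jacobian10.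
- rewrite nsfd_jacobian00 /= (@derive1_linear_fraction_fixed _ (1 + h * bx)).
  + rewrite mulr0 add0r; apply: normr_pdivr_lt1; nra.
  + by field; apply/andP.
  + rewrite gt_eqF //; nra.
- have hden_gt0 : 0 < 1 + h * (by_ - by_ * ux / bx + uy) by nra.
  rewrite nsfd_jacobian11 /= derive1_linear_fraction0 Xbar_term ?gt_eqF //.
  apply: normr_pdivr_lt1; nra.
Qed.

Lemma nsfd_unstable_infected_only : 0 < h -> 0 < bx -> 0 < by_ -> 0 < ux ->
  0 < uy -> 0 < K -> ux < uy -> by_ <= bx -> fp_unstable F (0, K * (1 - uy / by_)).
Proof.
move=> h_gt0 bx_gt0 by_gt0 ux_gt0 uy_gt0 K_gt0 lt_ux_uy le_by_bx.
have [by_neq0 K_neq0] : by_ != 0 /\ K != 0 by split; rewrite gt_eqF.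
have trig : jacobian2 F (0, K * (1 - uy / by_)) 0 1 = 0 \/
            jacobian2 F (0, K * (1 - uy / by_)) 1 0 = 0.
  by left; apply: nsfd_jacobian01.
have [lt_by_uy|le_uy_by] := ltP by_ uy.
- apply: (@fp_unstable_trig2 _ _ _ trig 1).
  rewrite nsfd_jacobian11 /= (@derive1_linear_fraction_fixed _ (1 + h * by_)).
  + rewrite mulr0 add0r; apply: normr_pdivr_ge1; nra.
  + by field; apply/andP.
  + rewrite gt_eqF //; nra.
- have le_uy_w : uy <= bx * uy / by_ by rewrite ler_pdivlMr //; nra.
  have le_w_bx : bx * uy / by_ <= bx by rewrite ler_pdivrMr //; nra.
  have Ybar_term : bx / K * (K * (1 - uy / by_)) = bx - bx * uy / by_.
    by field; apply/andP.
  have hden_gt0 : 0 < 1 + h * (bx - bx * uy / by_ + ux) by nra.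
  apply: (@fp_unstable_trig2 _ _ _ trig 0).
  rewrite nsfd_jacobian00 /= derive1_linear_fraction0 Ybar_term ?gt_eqF //.
  apply: normr_pdivr_ge1; nra.
Qed.

End NsfdMap.

Theorem theorem6 (R : realType) (bx by_ ux uy K h : R) :
  0 < bx -> 0 < by_ -> 0 < ux -> 0 < uy -> 0 < K ->
  ux < uy -> by_ <= bx -> 0 < h ->
  let F := nsfd_map h bx by_ ux uy K in
  let Xbar := K * (1 - ux / bx) in
  let Ybar := K * (1 - uy / by_) in
  ((bx < ux -> by_ < uy -> fp_stable F (0, 0)) /\
   (ux < bx -> by_ / uy < bx / ux -> fp_stable F (Xbar, 0)) /\
   fp_unstable F (0, Ybar)).
Proof.
move=> bx_gt0 by_gt0 ux_gt0 uy_gt0 K_gt0 lt_ux_uy le_by_bx h_gt0 F Xbar Ybar.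
split; [|split].
- exact: nsfd_stable_origin.
- exact: nsfd_stable_uninfected.
- exact: nsfd_unstable_infected_only.
Qed.
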